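(* Let $\mathcal{P}=\{\xi\in\mathbb{R}^r: C\xi\le d\}$ be a compact polytope with $C\in\mathbb{R}^{q\times r}$ and $d\in\mathbb{R}^q$ with all entries strictly positive, and let $w\in\mathbb{R}^q$ have nonnegative entries with $C^\top\mathrm{diag}(1/d^1,\dots,1/d^q)(\mathds{1}+w)=0$. For $\delta\in(0,\min_i d^i]$ let $\hat{B}_{\mathcal{P}}(\xi)=\sum_{i=1}^q(1+w^i)\big(\hat{B}(-C^i\xi+d^i)+\ln d^i\big)$, where $\hat{B}(z)=-\ln z$ for $z>\delta$ and $\hat{B}(z)=\tfrac12[((z-2\delta)/\delta)^2-1]-\ln\delta$ for $z\le\delta$, and let $\bar{\beta}(\delta):=\min_{i\in\{1,\dots,q\},\,\xi\in\mathbb{R}^r}\{\hat{B}_{\mathcal{P}}(\xi): C^i\xi=d^i\}$. Then $\bar{\beta}(\cdot)$ is a continuous function of $\delta$, and for every such $\delta$ the sublevel set $\{\xi\in\mathbb{R}^r:\hat{B}_{\mathcal{P}}(\xi)\le\bar{\beta}(\delta)\}$ is contained in $\mathcal{P}$.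
   Context: $C^i$ and $d^i$ denote the $i$-th row of $C$ and $i$-th entry of $d$; $\mathds{1}$ is the all-ones vector. The relaxation parameter $\delta$ enters $\hat{B}_{\mathcal{P}}$ through $\hat{B}$. *)

From HB Require Import structures.
From mathcomp Require Import all_boot all_order all_algebra.
From mathcomp Require Import all_classical all_reals all_analysis.
Set Implicit Arguments. Unset Strict Implicit. Unset Printing Implicit Defensive.
Import Order.TTheory GRing.Theory Num.Theory.
Import numFieldNormedType.Exports.
Local Open Scope classical_set_scope.
Local Open Scope ring_scope.

Definition polytope (R : realType) (q r : nat) (C : 'M[R]_(q, r)) (d : 'cV[R]_q)
  : set 'cV[R]_r := [set xi | forall i : 'I_q, (C *m xi) i 0 <= d i 0].

Definition Bhat (R : realType) (delta z : R) : R :=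
  if delta < z then - ln z
  else 2^-1 * (((z - 2 * delta) / delta) ^+ 2 - 1) - ln delta.

Definition BhatP (R : realType) (q r : nat) (C : 'M[R]_(q, r)) (d w : 'cV[R]_q)
  (delta : R) (xi : 'cV[R]_r) : R :=
  \sum_(i < q) (1 + w i 0) * (Bhat delta (- (C *m xi) i 0 + d i 0) + ln (d i 0)).

Definition betabar (R : realType) (q r : nat) (C : 'M[R]_(q, r)) (d w : 'cV[R]_q)
  (delta : R) : R :=
  inf [set BhatP C d w delta xi | xi in
        [set xi : 'cV[R]_r | exists i : 'I_q, (C *m xi) i 0 = d i 0]].

Definition delta_range (R : realType) (q : nat) (d : 'cV[R]_q) : set R :=
  [set delta | 0 < delta /\ forall i : 'I_q, delta <= d i 0].

From HB Require Import structures.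
From mathcomp Require Import all_boot all_order all_algebra.
From mathcomp Require Import all_classical all_reals all_analysis.
From mathcomp Require Import ring lra.
Import Order.TTheory GRing.Theory Num.Theory.
Import numFieldNormedType.Exports.
Local Open Scope classical_set_scope.
Local Open Scope ring_scope.

(* The relaxed barrier [Bhat delta] is strictly convex and its slope at
   [z >= delta] is [-1/z], so the condition on [w] says that [xi = 0] is a
   global minimiser of the convex function [BhatP].  A point [xi] outside [P]
   can be shrunk towards [0] until it first meets a facet [C^j xi = d^j]; by
   strict convexity along the segment this strictly lowers [BhatP], so
   [BhatP xi] exceeds [betabar] and [betabar] is an infimum over points of [P]
   only.  There every argument [-C^i xi + d^i] is nonnegative, and for such
   arguments [Bhat delta z] is locally Lipschitz in [delta] uniformly in [z],
   whence so is [betabar]. *)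

Lemma ln_lt_subr1 (R : realType) (x : R) : 0 < x -> x != 1 -> ln x < x - 1.
Proof.
move=> x0 x1; have lnx0 : ln x != 0 by rewrite ln_eq0.
by have := expR_gt1Dx lnx0; rewrite lnK ?posrE //; lra.
Qed.

Lemma ln_sub_lt (R : realType) (a b : R) :
  0 < a -> 0 < b -> a != b -> ln b - ln a < b / a - 1.
Proof.
move=> a0 b0 ab; rewrite -ln_div ?posrE //; apply: ln_lt_subr1; first exact: divr_gt0.
by apply: contra_neq ab => /divr1_eq.
Qed.

Lemma ln_sub_le (R : realType) (a b : R) : 0 < a -> 0 < b -> ln b - ln a <= b / a - 1.
Proof.
move=> a0 b0; have [->|ab] := eqVneq a b; last exact/ltW/ln_sub_lt.
by rewrite subrr divff ?gt_eqF // subrr.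
Qed.

Section RelaxedBarrier.
Variables (R : realType) (delta : R).
Hypothesis delta_gt0 : 0 < delta.

Definition Bhat_slope (y : R) : R :=
  if delta < y then - y^-1 else (y - 2 * delta) / delta ^+ 2.

Lemma Bhat_slope_ge (y : R) : delta <= y -> Bhat_slope y = - y^-1.
Proof.
rewrite le_eqVlt => /predU1P[<-|dy]; last by rewrite /Bhat_slope dy.
by rewrite /Bhat_slope ltxx; field; rewrite gt_eqF.
Qed.

Lemma Bhat_support_lt (y z : R) : z != y ->
  Bhat delta y + Bhat_slope y * (z - y) < Bhat delta z.
Proof.
move=> zy; have dn : delta != 0 by rewrite gt_eqF.
have zy2 : 0 < (z - y) ^+ 2 by rewrite exprn_even_gt0 //= subr_eq0.
have sq_ge0 u : 0 <= u ^+ 2 / (2 * delta ^+ 2).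
  by rewrite divr_ge0 ?sqr_ge0 ?mulr_ge0 ?ltW.
rewrite /Bhat /Bhat_slope; case: ifP => hy; case: ifP => hz.
- have y0 := lt_trans delta_gt0 hy; have z0 := lt_trans delta_gt0 hz.
  have := @ln_sub_lt _ y z y0 z0 ltac:(by rewrite eq_sym).
  have -> : - y^-1 * (z - y) = - (z / y - 1) by field; rewrite gt_eqF.
  lra.
- move/negbT: hz; rewrite -leNgt => hz.
  have y0 := lt_trans delta_gt0 hy.
  have := @ln_sub_lt _ y delta y0 delta_gt0 (negbT (gt_eqF hy)).
  have : 2^-1 * (((z - 2 * delta) / delta) ^+ 2 - 1) - ln delta
      = - ln y + - y^-1 * (z - y) - (ln delta - ln y - (delta / y - 1))
        + (delta - z) * (y - delta) / (y * delta) + (z - delta) ^+ 2 / (2 * delta ^+ 2).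
    by field; rewrite ?gt_eqF ?mulr_gt0.
  have : 0 <= (delta - z) * (y - delta) / (y * delta).
    by rewrite divr_ge0 ?mulr_ge0 ?subr_ge0 // ltW // mulr_gt0.
  have := sq_ge0 (z - delta); lra.
- move/negbT: hy; rewrite -leNgt => hy.
  have z0 := lt_trans delta_gt0 hz.
  have := @ln_sub_lt _ delta z delta_gt0 z0 (negbT (lt_eqF hz)).
  have : 2^-1 * (((y - 2 * delta) / delta) ^+ 2 - 1) + (y - 2 * delta) / delta ^+ 2 * (z - y)
      = - (z / delta - 1) - (delta - y) ^+ 2 / (2 * delta ^+ 2)
        - (delta - y) * (z - delta) / delta ^+ 2.
    by field.
  have : 0 <= (delta - y) * (z - delta) / delta ^+ 2.
    by rewrite divr_ge0 ?mulr_ge0 ?sqr_ge0 ?subr_ge0 // ltW.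
  have := sq_ge0 (delta - y); lra.
- have : 2^-1 * (((z - 2 * delta) / delta) ^+ 2 - 1)
      = 2^-1 * (((y - 2 * delta) / delta) ^+ 2 - 1) + (y - 2 * delta) / delta ^+ 2 * (z - y)
        + (z - y) ^+ 2 / (2 * delta ^+ 2).
    by field.
  have : 0 < (z - y) ^+ 2 / (2 * delta ^+ 2) by rewrite divr_gt0 // mulr_gt0 // exprn_gt0.
  lra.
Qed.

Lemma Bhat_support (y z : R) : Bhat delta y + Bhat_slope y * (z - y) <= Bhat delta z.
Proof.
have [->|zy] := eqVneq z y; first by rewrite subrr mulr0 addr0.
exact/ltW/Bhat_support_lt.
Qed.

Lemma Bhat_convex_lt (t x z : R) : 0 < t < 1 -> z != x ->
  Bhat delta (t * z + (1 - t) * x) < t * Bhat delta z + (1 - t) * Bhat delta x.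
Proof.
move=> /andP[t0 t1] zx; set y := t * z + (1 - t) * x.
have zy : z != y.
  rewrite -subr_eq0 (_ : z - y = (1 - t) * (z - x)); last by rewrite /y; ring.
  by rewrite mulf_neq0 // ?subr_eq0 // gt_eqF // subr_gt0.
set s := Bhat_slope y.
have gap_z : 0 < t * (Bhat delta z - (Bhat delta y + s * (z - y))).
  by rewrite mulr_gt0 // subr_gt0 Bhat_support_lt.
have gap_x : 0 <= (1 - t) * (Bhat delta x - (Bhat delta y + s * (x - y))).
  by rewrite mulr_ge0 // subr_ge0 ?Bhat_support // ltW.
have : t * (z - y) + (1 - t) * (x - y) = 0 by rewrite /y; ring.
nra.
Qed.

Lemma Bhat_convex (t x z : R) : 0 < t < 1 ->
  Bhat delta (t * z + (1 - t) * x) <= t * Bhat delta z + (1 - t) * Bhat delta x.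
Proof.
move=> t01; have [->|zx] := eqVneq z x; last exact/ltW/Bhat_convex_lt.
by rewrite -!mulrDl subrKC !mul1r.
Qed.

End RelaxedBarrier.

Lemma Bhat_dist_delta_between (R : realType) (a b z : R) :
  0 < a -> a < z -> z <= b -> `|Bhat a z - Bhat b z| <= 2 * (b / a - 1).
Proof.
move=> a0 az zb; have z0 := lt_trans a0 az; have b0 := lt_le_trans z0 zb.
rewrite /Bhat az ltNge zb /=.
pose v := z / b.
have -> : 2^-1 * (((z - 2 * b) / b) ^+ 2 - 1) = 2^-1 * ((1 - v) * (3 - v)).
  by rewrite /v; field; rewrite gt_eqF.
have v0 : 0 <= v by rewrite /v divr_ge0 // ltW.
have v1 : v <= 1 by rewrite /v ler_pdivrMr // mul1r.
have av : a / b <= v by rewrite /v ler_pM2r ?invr_gt0 // ltW.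
have amgm : 1 - a / b <= b / a - 1.
  rewrite -subr_ge0 (_ : _ - _ = (b - a) ^+ 2 / (a * b)); last by field; rewrite ?gt_eqF.
  by rewrite divr_ge0 ?sqr_ge0 // mulr_ge0 // ltW.
have ln_zb : ln z <= ln b by rewrite ler_ln ?posrE.
have ln_bz := @ln_sub_le _ z b z0 b0.
have bza : b / z <= b / a by rewrite ler_pM2l // lef_pV2 ?posrE // ltW.
have quad_ge0 : 0 <= (1 - v) * (3 - v) by apply: mulr_ge0; lra.
have quad_le : (1 - v) * (3 - v) <= 3 * (1 - v).
  by rewrite [X in X <= _]mulrC ler_wpM2r //; lra.
rewrite ler_norml; lra.
Qed.

Lemma Bhat_dist_delta_below (R : realType) (a b z : R) :
  0 < a -> a <= b -> 0 <= z -> z <= a -> `|Bhat a z - Bhat b z| <= 2 * (b / a - 1).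
Proof.
move=> a0 ab z0 za; have b0 := lt_le_trans a0 ab.
rewrite /Bhat ltNge za ltNge (le_trans za ab) /=.
pose p := z / b * (b / a - 1); pose s := z / a + z / b - 4.
have -> : 2^-1 * (((z - 2 * a) / a) ^+ 2 - 1) - ln a - (2^-1 * (((z - 2 * b) / b) ^+ 2 - 1) - ln b)
    = 2^-1 * (p * s) + (ln b - ln a).
  by rewrite /p /s; field; rewrite ?gt_eqF.
have za1 : z / a <= 1 by rewrite ler_pdivrMr // mul1r.
have zb1 : z / b <= 1 by rewrite ler_pdivrMr // mul1r (le_trans za).
have za0 : 0 <= z / a by rewrite divr_ge0 // ltW.
have zb0 : 0 <= z / b by rewrite divr_ge0 // ltW.
have ba1 : 0 <= b / a - 1 by rewrite subr_ge0 ler_pdivlMr // mul1r.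
have p0 : 0 <= p by rewrite mulr_ge0.
have p_le : p <= b / a - 1 by rewrite -[X in _ <= X]mul1r ler_wpM2r.
have ps_ge : 0 <= p * s + 4 * p.
  have -> : p * s + 4 * p = p * (z / a + z / b) by rewrite /s; ring.
  by rewrite mulr_ge0 ?addr_ge0.
have ps_le0 : p * s <= 0 by rewrite mulr_ge0_le0 // /s; lra.
have ln_ab : ln a <= ln b by rewrite ler_ln ?posrE.
have := @ln_sub_le _ a b a0 b0.
rewrite ler_norml; lra.
Qed.

Lemma Bhat_dist_delta (R : realType) (a b m z : R) :
  0 < m -> m <= a -> m <= b -> 0 <= z -> `|Bhat a z - Bhat b z| <= 2 / m * `|b - a|.
Proof.
wlog ab : a b / a <= b.
  move=> W m0 ma mb z0; have [ab|/ltW ba] := leP a b; first exact: W.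
  by rewrite distrC (distrC b a) W.
move=> m0 ma mb z0; have a0 := lt_le_trans m0 ma.
have bound : 2 * (b / a - 1) <= 2 / m * `|b - a|.
  rewrite ger0_norm ?subr_ge0 // (_ : b / a - 1 = (b - a) / a); last by field; rewrite gt_eqF.
  rewrite (_ : 2 / m * _ = 2 * ((b - a) / m)); last by ring.
  by rewrite ler_pM2l // ler_wpM2l ?subr_ge0 // lef_pV2 ?posrE.
have [bz|zb] := ltP b z.
  by rewrite /Bhat (le_lt_trans ab bz) bz subrr normr0 mulr_ge0 ?divr_ge0 // ltW.
apply: le_trans bound; have [az|za] := ltP a z.
  exact: Bhat_dist_delta_between.
exact: Bhat_dist_delta_below.
Qed.

Lemma within_continuous_locally_lipschitz (R : realFieldType) (A : set R) (f : R -> R) :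
  (forall x, A x -> exists2 e, 0 < e & exists k, forall y, A y -> `|y - x| < e ->
     `|f x - f y| <= k * `|y - x|) ->
  {within A, continuous f}.
Proof.
move=> lip; apply/subspace_continuousP => x Ax; apply/cvgrPdist_le => e e0.
have [eta eta0 [k fk]] := lip x Ax.
have k1 : 0 < `|k| + 1 by rewrite ltr_wpDl.
apply/nbhs_ballP; exists (Num.min eta (e / (`|k| + 1))) => /=.
  by rewrite lt_min eta0 divr_gt0.
move=> y; rewrite /ball /= lt_min distrC => /andP[y_eta y_e] Ay.
apply: le_trans (fk y Ay y_eta) _.
apply: le_trans (_ : (`|k| + 1) * `|y - x| <= e).
  by rewrite ler_wpM2r // (le_trans (ler_norm k)) // lerDl.
by rewrite mulrC -ler_pdivlMr // ltW.
Qed.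

Section BarrierOnPolytope.
Variables (R : realType) (q r : nat) (C : 'M[R]_(q, r)) (d w : 'cV[R]_q).
Hypothesis d_gt0 : forall i, 0 < d i 0.
Hypothesis w_ge0 : forall i, 0 <= w i 0.
Hypothesis w_stationary : C^T *m diag_mx (\row_i (d i 0)^-1) *m (const_mx 1 + w) = 0.

Lemma weighted_slack_sum_eq0 (xi : 'cV[R]_r) :
  \sum_(i < q) (1 + w i 0) * ((C *m xi) i 0 / d i 0) = 0.
Proof.
have := congr1 (fun M => (xi^T *m M) 0 0) w_stationary.
rewrite /= mulmx0 !mulmxA -trmx_mul mul_mx_diag mxE [RHS]mxE; apply: etrans.
by apply: eq_bigr => i _; rewrite !mxE; ring.
Qed.

Lemma BhatP_ge_at0 (delta : R) (xi : 'cV[R]_r) : delta_range d delta ->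
  BhatP C d w delta 0 <= BhatP C d w delta xi.
Proof.
move=> [delta_gt0 delta_le].
rewrite -[BhatP _ _ _ _ 0]addr0 -(weighted_slack_sum_eq0 xi) /BhatP -big_split /=.
apply: ler_sum => i _; rewrite mulmx0 mxE oppr0 add0r -mulrDr.
rewrite ler_wpM2l ?addr_ge0 //.
have := @Bhat_support _ _ delta_gt0 (d i 0) (- (C *m xi) i 0 + d i 0).
rewrite Bhat_slope_ge // (_ : _ * _ = (C *m xi) i 0 / d i 0); first lra.
by field; rewrite gt_eqF.
Qed.

Lemma BhatP_scale_lt (delta t : R) (xi : 'cV[R]_r) (i0 : 'I_q) :
  0 < delta -> 0 < t < 1 -> (C *m xi) i0 0 != 0 ->
  BhatP C d w delta (t *: xi) < t * BhatP C d w delta xi + (1 - t) * BhatP C d w delta 0.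
Proof.
move=> delta_gt0 t01 xi_i0.
have scale i : (C *m (t *: xi)) i 0 = t * (C *m xi) i 0 by rewrite -scalemxAr mxE.
have term i : t * ((1 + w i 0) * (Bhat delta (- (C *m xi) i 0 + d i 0) + ln (d i 0)))
    + (1 - t) * ((1 + w i 0) * (Bhat delta (d i 0) + ln (d i 0)))
  = (1 + w i 0) * (t * Bhat delta (- (C *m xi) i 0 + d i 0)
      + (1 - t) * Bhat delta (d i 0) + ln (d i 0)).
  by ring.
have at0 i : - (C *m (0 : 'cV_r)) i 0 + d i 0 = d i 0 by rewrite mulmx0 mxE oppr0 add0r.
have arg i : - (C *m (t *: xi)) i 0 + d i 0
    = t * (- (C *m xi) i 0 + d i 0) + (1 - t) * d i 0.
  by rewrite scale; ring.
rewrite /BhatP !mulr_sumr -big_split /=; under [X in _ < X]eq_bigr do rewrite at0.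
rewrite (bigD1 i0) //= [X in _ < X](bigD1 i0) //=.
have w1_gt0 i : 0 < 1 + w i 0 by have := w_ge0 i; lra.
apply: ltr_leD.
  rewrite term arg ltr_pM2l // ltrD2r Bhat_convex_lt //.
  by rewrite -subr_eq0 addrK oppr_eq0.
apply: ler_sum => i _; rewrite term arg ler_wpM2l ?addr_ge0 // lerD2r.
exact: Bhat_convex.
Qed.

Lemma BhatP_facet_point_lt (delta : R) (xi : 'cV[R]_r) : delta_range d delta ->
  ~ polytope C d xi ->
  exists eta : 'cV[R]_r, (exists j, (C *m eta) j 0 = d j 0) /\ polytope C d eta /\
    BhatP C d w delta eta < BhatP C d w delta xi.
Proof.
move=> delta_ok xi_out; have [delta_gt0 _] := delta_ok.
pose c i := (C *m xi) i 0.
have [i0 c_i0] : exists i, d i 0 < c i.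
  have [i] : exists i, ~ (c i <= d i 0) by apply/existsNP.
  by move=> /negP; rewrite -ltNge; exists i.
have c_i0_gt0 : 0 < c i0 := lt_trans (d_gt0 i0) c_i0.
have [j c_j j_min] := @arg_minP _ R 'I_q i0 (fun i => 0 < c i) (fun i => d i 0 / c i) c_i0_gt0.
pose t := d j 0 / c j.
have t0 : 0 < t by rewrite divr_gt0.
have t1 : t < 1 by rewrite (le_lt_trans (j_min i0 c_i0_gt0)) // ltr_pdivrMr // mul1r.
have scale i : (C *m (t *: xi)) i 0 = t * c i by rewrite -scalemxAr mxE.
exists (t *: xi); split; first by exists j; rewrite scale /t divfK // gt_eqF.
split.
  move=> k; rewrite scale; have [c_k|c_k] := ltP 0 (c k).
    by rewrite -ler_pdivlMr //; exact: j_min.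
  by rewrite (le_trans (mulr_ge0_le0 (ltW t0) c_k)) // ltW.
have conv := BhatP_scale_lt delta t xi i0 delta_gt0 (ltac:(by rewrite t0 t1))
  (ltac:(by rewrite gt_eqF)).
have min0 : (1 - t) * BhatP C d w delta 0 <= (1 - t) * BhatP C d w delta (t *: xi).
  by rewrite ler_wpM2l ?BhatP_ge_at0 // subr_ge0 ltW.
by rewrite -(ltr_pM2l t0); lra.
Qed.

Lemma betabar_le_facet (delta : R) (eta : 'cV[R]_r) : delta_range d delta ->
  (exists j, (C *m eta) j 0 = d j 0) -> betabar C d w delta <= BhatP C d w delta eta.
Proof.
move=> delta_ok eta_facet; apply: ge_inf; last by exists eta.
by exists (BhatP C d w delta 0) => _ [xi _ <-]; exact: BhatP_ge_at0.
Qed.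

Lemma sublevel_betabar_sub_polytope (delta : R) : delta_range d delta ->
  [set xi : 'cV[R]_r | BhatP C d w delta xi <= betabar C d w delta] `<=` polytope C d.
Proof.
move=> delta_ok xi /= xi_le; apply: contrapT => xi_out.
have [eta [eta_facet [_ eta_lt]]] := BhatP_facet_point_lt delta xi delta_ok xi_out.
by have := betabar_le_facet delta eta delta_ok eta_facet; lra.
Qed.

Local Notation weight_sum := (\sum_(i < q) (1 + w i 0)).

Lemma weight_sum_ge0 : 0 <= weight_sum.
Proof. by apply: sumr_ge0 => i _; rewrite addr_ge0. Qed.

Lemma dist_BhatP_delta (a b m : R) (eta : 'cV[R]_r) :
  0 < m -> m <= a -> m <= b -> polytope C d eta ->
  `|BhatP C d w a eta - BhatP C d w b eta| <= weight_sum * (2 / m) * `|b - a|.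
Proof.
move=> m0 ma mb eta_in; rewrite /BhatP -sumrB -mulrA mulr_suml.
apply: le_trans (ler_norm_sum _ _ _) _; apply: ler_sum => i _.
rewrite -mulrBr normrM ger0_norm ?addr_ge0 // ler_wpM2l ?addr_ge0 //.
rewrite opprD addrACA subrr addr0 Bhat_dist_delta //.
by have := eta_in i; lra.
Qed.

Lemma betabar_le_add (a b m : R) : delta_range d a -> delta_range d b ->
  0 < m -> m <= a -> m <= b ->
  betabar C d w b <= betabar C d w a + weight_sum * (2 / m) * `|b - a|.
Proof.
move=> a_ok b_ok m0 ma mb.
have [[xi0 xi0_facet]|no_facet] :=
  pselect (exists xi : 'cV[R]_r, exists i, (C *m xi) i 0 = d i 0); last first.
  have betabar0 delta : betabar C d w delta = 0.
    rewrite /betabar -[RHS](@inf0 R); congr inf.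
    by apply/seteqP; split => // y [xi xi_facet _]; apply: no_facet; exists xi.
  rewrite !betabar0 add0r mulr_ge0 // mulr_ge0 ?weight_sum_ge0 //.
  by rewrite divr_ge0 // ltW.
rewrite -lerBlDr; apply: lb_le_inf; first by exists (BhatP C d w a xi0), xi0.
move=> _ [xi xi_facet <-].
have [eta [eta_facet [eta_in eta_le]]] : exists eta, (exists j, (C *m eta) j 0 = d j 0) /\
    polytope C d eta /\ BhatP C d w a eta <= BhatP C d w a xi.
  have [xi_in|xi_out] := pselect (polytope C d xi); first by exists xi.
  have [eta [? [? /ltW ?]]] := BhatP_facet_point_lt a xi a_ok xi_out.
  by exists eta.
have := betabar_le_facet b eta b_ok eta_facet.
have := dist_BhatP_delta a b m eta m0 ma mb eta_in; rewrite ler_norml => /andP[? ?].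
lra.
Qed.

Lemma betabar_continuous : {within delta_range d, continuous (betabar C d w)}.
Proof.
apply: within_continuous_locally_lipschitz => x x_ok; have [x0 _] := x_ok.
exists (x / 2); first by rewrite divr_gt0.
exists (weight_sum * (2 / (x / 2))) => y y_ok yx.
have m0 : 0 < x / 2 by rewrite divr_gt0.
have mx : x / 2 <= x by lra.
have my : x / 2 <= y by rewrite distrC in yx; have := ltr_distlBl yx; lra.
have := betabar_le_add x y (x / 2) x_ok y_ok m0 mx my.
have := betabar_le_add y x (x / 2) y_ok x_ok m0 my mx.
rewrite distrC ler_norml; lra.
Qed.

End BarrierOnPolytope.

Theorem lemma2 (R : realType) (q r : nat) (C : 'M[R]_(q, r)) (d w : 'cV[R]_q) :
  compact (polytope C d) ->
  (forall i : 'I_q, 0 < d i 0) ->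
  (forall i : 'I_q, 0 <= w i 0) ->
  C^T *m diag_mx (\row_i (d i 0)^-1) *m (const_mx 1 + w) = 0 ->
  {within delta_range d, continuous (betabar C d w)} /\
  (forall delta : R, delta_range d delta ->
     [set xi : 'cV[R]_r | BhatP C d w delta xi <= betabar C d w delta]
       `<=` polytope C d).
Proof.
move=> _ d_gt0 w_ge0 w_stationary; split.
  exact: betabar_continuous.
exact: sublevel_betabar_sub_polytope.
Qed.
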